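(* Let $k,n$ be integers with $2\le k\le n-2$. Then, as polynomials in $t$, $$i(\mathrm{Sp}_{k,n},t)=i(\mathrm{Sp}_{n-k,n},t)=i(U_{k,n},t)-i(T_{k,n},t-1).$$
   Context: For $S,T\subseteq[n]$, write $T\le S$ if $|T|=|S|$ and the $i$-th smallest element of $T$ is at most the $i$-th smallest element of $S$ for each $i$. The Schubert matroid $\mathrm{SM}_n(S)$ is the matroid on $[n]$ with bases $\{T\subseteq[n]:T\le S\}$. For a matroid $M$ on $[n]$, $i(M,t)$ is the Ehrhart polynomial of its matroid polytope $\mathrm{conv}\{\sum_{b\in B}e_b: B\text{ a basis}\}$ (the polynomial counting lattice points in the $t$-th dilate for positive integers $t$), and $i(M,t-1)$ is this polynomial evaluated at $t-1$. $U_{k,n}=\mathrm{SM}_n(\{n-k+1,\dots,n\})$; $T_{k,n}=\mathrm{SM}_n(\{2,3,\dots,k,n\})$; $\mathrm{Sp}_{k,n}=\mathrm{SM}_n(\{k\}\cup\{k+2,\dots,n\})$. *)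

From HB Require Import structures.
From mathcomp Require Import all_boot all_order all_algebra.
Set Implicit Arguments. Unset Strict Implicit. Unset Printing Implicit Defensive.
Import Order.TTheory GRing.Theory Num.Theory.
Local Open Scope ring_scope.

(* Ground set [n] = {1,...,n} is modelled by 'I_n, element i : 'I_n standing
   for i.+1.  A "matroid" is given by its family of bases, a predicate on
   {set 'I_n}. *)

Definition sorted_elems (n : nat) (T : {set 'I_n}) : seq nat :=
  sort leq [seq (val i).+1 | i <- enum T].

Definition gale_le (n : nat) (T S : {set 'I_n}) : bool :=
  (#|T| == #|S|)%N && all2 leq (sorted_elems T) (sorted_elems S).

Definition SM (n : nat) (S : {set 'I_n}) : pred {set 'I_n} :=
  fun T => gale_le T S.

Definition Ukn (k n : nat) : pred {set 'I_n} :=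
  SM [set i : 'I_n | (n - k + 1 <= (val i).+1)%N].
Definition Tkn (k n : nat) : pred {set 'I_n} :=
  SM [set i : 'I_n | (2 <= (val i).+1 <= k)%N || ((val i).+1 == n)].
Definition Spkn (k n : nat) : pred {set 'I_n} :=
  SM [set i : 'I_n | ((val i).+1 == k) || (k + 2 <= (val i).+1)%N].

(* x : Z^n lies in the t-th dilate of the matroid polytope
   conv{ e_B : B basis }: x = sum_B lam_B e_B with lam_B >= 0 and
   sum_B lam_B = t. *)
Definition in_dilate (n : nat) (bases : pred {set 'I_n}) (t : nat)
    (x : {ffun 'I_n -> int}) : Prop :=
  exists lam : {set 'I_n} -> rat,
    (forall B, 0 <= lam B) /\
    (\sum_(B | bases B) lam B = t%:R) /\
    (forall i : 'I_n, (x i)%:~R = \sum_(B | bases B) lam B * (i \in B)%:R).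

Definition lattice_count (n : nat) (bases : pred {set 'I_n}) (t c : nat)
  : Prop :=
  exists s : seq {ffun 'I_n -> int},
    uniq s /\ (forall x, x \in s <-> in_dilate bases t x) /\ size s = c.

Definition ehrhart_poly (n : nat) (bases : pred {set 'I_n}) (p : {poly rat})
  : Prop :=
  forall t : nat, (0 < t)%N ->
    exists c : nat, lattice_count bases t c /\ p.[t%:R] = c%:R.

Arguments Ukn k n : clear implicits.
Arguments Tkn k n : clear implicits.
Arguments Spkn k n : clear implicits.

From HB Require Import structures.
From mathcomp Require Import all_boot all_order all_algebra.
From mathcomp Require Import zify.
Set Implicit Arguments. Unset Strict Implicit. Unset Printing Implicit Defensive.

(* All four matroids are Schubert matroids SM_n(S) with
   S = {a-m+1, ..., a} u {n-r+m+1, ..., n}, whose bases are the r-sets meeting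
   {1, ..., a} in at least m elements.  Their polytopes have the integer
   decomposition property, so the lattice points of the t-th dilate are the
   x in {0..t}^n with sum r t and x_1 + ... + x_a >= m t.  Writing N(d, t, s)
   for the number of points of {0..t}^d with coordinate sum s, this gives
     i(U_{k,n}, t) = N(n, t, k t),
     i(T_{k,n}, t) = sum_w N(k, t, w) N(n-k, t, w),
     i(Sp_{n-k,n}, t) = sum_(w >= t) N(n-k, t, w) N(k, t, k t - w),
   and reflecting x |-> t - x shows i(Sp_{k,n}, t) = i(Sp_{n-k,n}, t).
   Splitting N(n, t, k t) according to whether the first n-k coordinates sum to
   at least t yields the identity, the other part being i(T_{k,n}, t-1).
   Polynomiality comes from N(d, t, c t + s) being a polynomial in (s, t) for
   0 < s <= t, by induction on d using sums of powers. *)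

Fixpoint box (d t : nat) : seq (seq nat) :=
  if d is d'.+1 then [seq v :: y | v <- iota 0 t.+1, y <- box d' t] else [:: [::]].

Definition nbox d t N := \sum_(y <- box d t) (sumn y == N).

Lemma boxS d t : box d.+1 t = [seq v :: y | v <- iota 0 t.+1, y <- box d t].
Proof. by []. Qed.

Lemma mem_box d t y : (y \in box d t) = (size y == d) && all (fun v => v <= t) y.
Proof.
elim: d y => [|d IH] y; first by case: y.
rewrite boxS; apply/allpairsP/idP.
  case=> [[v z] [hv hz ->]]; move: hz hv; rewrite IH mem_iota /= => /andP[/eqP-> ->] hv.
  by rewrite eqxx andbT; lia.
case: y => [|v y] //= /andP[hs /andP[hv ha]]; exists (v, y); split => //=.
  by rewrite -[_ :: _]/(iota 0 t.+1) mem_iota; lia.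
by rewrite IH -eqSS hs.
Qed.

Lemma size_box d t y : y \in box d t -> size y = d.
Proof. by rewrite mem_box => /andP[/eqP]. Qed.

Lemma box_uniq d t : uniq (box d t).
Proof.
elim: d => [|d IH] //; rewrite boxS; apply: allpairs_uniq => //; first exact: iota_uniq.
by move=> [v1 y1] [v2 y2] _ _ /= [-> ->].
Qed.

Lemma big_box_cat a b t (F : seq nat -> nat) :
  \sum_(y <- box (a + b) t) F y = \sum_(y1 <- box a t) \sum_(y2 <- box b t) F (y1 ++ y2).
Proof.
elim: a F => [|a IH] F; first by rewrite add0n /= big_seq1.
by rewrite addSn !boxS !big_allpairs_dep; apply: eq_bigr => v _; rewrite IH.
Qed.

Lemma nbox0 t N : nbox 0 t N = (N == 0).
Proof. by rewrite /nbox /= big_seq1 eq_sym. Qed.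

Lemma nboxS d t N : nbox d.+1 t N = \sum_(v < t.+1 | v <= N) nbox d t (N - v).
Proof.
rewrite /nbox boxS big_allpairs_dep.
rewrite -(big_mkord (fun v => v <= N) (fun v => nbox d t (N - v))) /index_iota subn0.
rewrite [RHS]big_mkcond /=; apply: eq_bigr => v _; case: ifP => hv.
  by apply: eq_bigr => y _; congr nat_of_bool; apply/eqP/eqP; lia.
by rewrite big1 // => y _; case: eqP => //; lia.
Qed.

Lemma nbox_sum0 d t : nbox d t 0 = 1.
Proof.
elim: d => [|d IH]; first by rewrite nbox0.
by rewrite nboxS big_mkcond big_ord_recl /= IH big1.
Qed.

Lemma nbox_eq0 d t N : d * t < N -> nbox d t N = 0.
Proof.
elim: d N => [|d IH] N hN; first by rewrite nbox0; case: N hN.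
rewrite nboxS big1 // => v hv; apply: IH.
by have := ltn_ord v; rewrite mulSn in hN; lia.
Qed.

Lemma nbox_widenS d t N : N <= t -> nbox d t N = nbox d t.+1 N.
Proof.
elim: d N => [|d IH] N hN; first by rewrite !nbox0.
rewrite !nboxS big_mkcond [RHS]big_mkcond [RHS]big_ord_recr /= leqNgt ltnS hN /= addn0.
by apply: eq_bigr => v _; case: ifP => // hv; rewrite IH //; lia.
Qed.

Lemma nbox_widen d t j N : N <= t -> nbox d t N = nbox d (t + j) N.
Proof.
move=> hN; elim: j => [|j IH]; first by rewrite addn0.
by rewrite IH addnS nbox_widenS //; lia.
Qed.

(* Reflection [v |-> t - v] of every coordinate. *)
Lemma nbox_sym d t N : N <= d * t -> nbox d t N = nbox d t (d * t - N).
Proof.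
elim: d N => [|d IH] N hN; first by move: hN; rewrite mul0n leqn0 => /eqP->.
rewrite !nboxS big_mkcond [RHS]big_mkcond [RHS](reindex_inj rev_ord_inj) /=.
rewrite mulSn in hN *; apply: eq_bigr => v _; have hvt := ltn_ord v.
case: (leqP v N) => hv.
  case: (leqP (N - v) (d * t)) => h2.
    by rewrite ifT; [rewrite IH //; congr nbox | ]; lia.
  by rewrite ifF ?nbox_eq0 //; apply/negbTE; lia.
by rewrite ifT ?nbox_eq0 //; lia.
Qed.

Definition nbox_split a b t N L :=
  \sum_(N1 < N.+1 | L <= N1) nbox a t N1 * nbox b t (N - N1).

Lemma sum_by_value (T : Type) (s : seq T) (f : T -> nat) (G : nat -> nat) M :
  (forall v, M <= v -> G v = 0) ->
  \sum_(y <- s) G (f y) = \sum_(v < M) (\sum_(y <- s) (f y == v)) * G v.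
Proof.
move=> hG; under [RHS]eq_bigr do rewrite big_distrl /=.
rewrite exchange_big /=; apply: eq_bigr => y _.
case: (ltnP (f y) M) => h.
  rewrite (bigD1 (Ordinal h)) //= eqxx mul1n big1 ?addn0 // => v hv.
  by rewrite (_ : (f y == v) = false) ?mul0n //; apply: contraNF hv => /eqP e; apply/eqP/val_inj.
rewrite hG // big1 // => v _; rewrite (_ : (f y == v) = false) ?mul0n //.
by apply/negbTE; have := ltn_ord v; lia.
Qed.

Lemma nbox_splitE a b t N L :
  \sum_(y <- box (a + b) t) ((sumn y == N) && (L <= sumn (take a y))) = nbox_split a b t N L.
Proof.
pose G s := (L <= s) * (s <= N) * nbox b t (N - s).
rewrite big_box_cat (eq_big_seq (fun y => G (sumn y))); last first.
  move=> y1 hy1; rewrite /G /nbox big_distrr /=; apply: eq_bigr => y2 _.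
  rewrite take_size_cat ?(size_box hy1) // sumn_cat.
  case: (leqP L (sumn y1)); case: (leqP (sumn y1) N) => h1 h2 /=;
    rewrite ?mul1n ?mul0n ?andbT ?andbF //.
    by congr nat_of_bool; apply/eqP/eqP; lia.
  by case: eqP => //; lia.
rewrite (@sum_by_value _ _ sumn G N.+1); last first.
  by move=> v hv; rewrite /G (_ : (v <= N) = false) ?muln0 ?mul0n //; lia.
rewrite /nbox_split [RHS]big_mkcond; apply: eq_bigr => v _; rewrite -/(nbox a t v) /G.
have := ltn_ord v; rewrite ltnS => ->; rewrite muln1.
by case: (L <= v); rewrite ?mul1n ?mul0n ?muln0.
Qed.

Lemma nbox_add a b t N : nbox (a + b) t N = nbox_split a b t N 0.
Proof. by rewrite -nbox_splitE; apply: eq_bigr => y _; rewrite andbT. Qed.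

Definition nbox_dot a b t := \sum_(w < t.+1) nbox a t w * nbox b t w.

Lemma big_ord_widen_vanish (F : nat -> nat) (P : pred nat) X Y : X <= Y ->
  (forall i, X < i -> F i = 0) ->
  \sum_(i < X.+1 | P i) F i = \sum_(i < Y.+1 | P i) F i.
Proof.
move=> hXY hF; rewrite (big_ord_widen_cond Y.+1 P F) // big_mkcond [RHS]big_mkcond.
by apply: eq_bigr => i _; case: (P i); case: ltnP => // h; rewrite hF.
Qed.

Lemma nbox_split_swap a b t : nbox_split a b t (b * t) t = nbox_split b a t (a * t) t.
Proof.
have E c d : nbox_split c d t (d * t) t = \sum_(i < (d * t).+1 | t <= i) nbox c t i * nbox d t i.
  apply: eq_bigr => i _; have hi : i <= d * t by rewrite -ltnS ltn_ord.
  by rewrite (nbox_sym hi).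
pose F i := nbox a t i * nbox b t i.
have Fb : \sum_(i < (b * t).+1 | t <= i) F i = \sum_(i < (b * t + a * t).+1 | t <= i) F i.
  by apply: big_ord_widen_vanish (leq_addr _ _) _ => i hi; rewrite /F [nbox b t i]nbox_eq0 ?muln0.
have Fa : \sum_(i < (a * t).+1 | t <= i) F i = \sum_(i < (b * t + a * t).+1 | t <= i) F i.
  by apply: big_ord_widen_vanish (leq_addl _ _) _ => i hi; rewrite /F [nbox a t i]nbox_eq0.
by rewrite !E Fb; under [RHS]eq_bigr do rewrite mulnC; rewrite Fa.
Qed.

Lemma nbox_split_top a b t : 0 < a ->
  nbox_split a b t (a * t) ((a - 1) * t) = nbox_dot a b t.
Proof.
move=> ha; rewrite /nbox_split /nbox_dot (reindex_inj rev_ord_inj) /=.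
rewrite [RHS](big_ord_widen (a * t).+1 (fun w => nbox a t w * nbox b t w)); last first.
  by rewrite ltnS leq_pmull.
apply: eq_big => [w | w hw]; have := ltn_ord w => hw'.
  by rewrite /= mulnBl mul1n; apply/idP/idP; lia.
rewrite subSS nbox_sym; last lia.
by rewrite subKn; [rewrite (nbox_sym (d := a)) | ]; lia.
Qed.

(* Split by whether the first [b] coordinates sum to more than [t]; if not, both
   blocks (the last one after reflection) have sum at most [t], so the bound
   [t.+1] on the coordinates can be lowered to [t]. *)
Lemma nbox_add_split b k t : 0 < k ->
  nbox (b + k) t.+1 (k * t.+1) = nbox_split b k t.+1 (k * t.+1) t.+1 + nbox_dot k b t.
Proof.
move=> hk; rewrite nbox_add /nbox_split (bigID (fun M : 'I_(k * t.+1).+1 => t.+1 <= M)) /=.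
congr addn.
rewrite /nbox_dot (big_ord_widen (k * t.+1).+1 (fun w => nbox k t w * nbox b t w)); last first.
  exact: leq_trans (leq_pmull _ hk) (leqnSn _).
apply: eq_big => [i | i hi]; first by rewrite -leqNgt ltnS.
have hi' : i <= t by rewrite leqNgt.
have hik : i <= k * t.+1 by rewrite -ltnS ltn_ord.
rewrite -(nbox_sym hik) mulnC; move: (nat_of_ord i) hi' => j hj.
by rewrite -(addn1 t) -!(nbox_widen _ 1 hj).
Qed.

Lemma nboxS_block d t c s : 0 < s <= t ->
  nbox d.+1 t (c * t + s) = \sum_(u < s) nbox d t (c * t + u.+1) +
     (if c is c'.+1 then \sum_(s <= u < t.+1) nbox d t (c' * t + u) else 1).
Proof.
move=> /andP[hs hst].
rewrite nboxS big_mkcond.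
rewrite -(big_mkord xpredT (fun v => if v <= c * t + s then nbox d t (c * t + s - v) else 0)).
rewrite (@big_cat_nat _ _ _ s) //=; last by lia.
congr addn.
  rewrite big_nat_rev /= -(big_mkord xpredT (fun u => nbox d t (c * t + u.+1))).
  by apply: eq_big_nat => u hu; rewrite ifT; [congr nbox | ]; lia.
case: c => [|c].
  rewrite big_ltn ?ltnS // mul0n add0n leqnn subnn nbox_sum0 big1_seq ?addn0 // => v /andP[_].
  by rewrite mem_index_iota => hv; rewrite ifF //; lia.
rewrite big_nat_rev /=; apply: eq_big_nat => u hu; rewrite ifT; last by rewrite mulSn; lia.
by congr nbox; rewrite mulSn; lia.
Qed.

Lemma count_leq_below a j (s : seq nat) : all (leq a) s -> j < a ->
  count (fun v => v <= j) s = 0.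
Proof.
move=> ha hj; apply/eqP; rewrite -leqn0 leqNgt -has_count; apply/hasP => -[x hx hxj].
by move/allP: ha => /(_ x hx); lia.
Qed.

Lemma all2_leq_count (s1 s2 : seq nat) : sorted leq s1 -> sorted leq s2 -> size s1 = size s2 ->
  all2 leq s1 s2 <-> forall j, count (fun v => v <= j) s2 <= count (fun v => v <= j) s1.
Proof.
elim: s1 s2 => [|a s1 IH] [|b s2] //= h1 h2 [hs].
have m1 := order_path_min leq_trans h1; have m2 := order_path_min leq_trans h2.
have {}IH := IH s2 (path_sorted h1) (path_sorted h2) hs.
split.
  by move=> /andP[hab /IH H] j; have := H j; case: (leqP b j); case: (leqP a j) => /=; lia.
move=> H; have hab : a <= b.
  case: (leqP a b) => // hba; have := H b.
  by rewrite leqnn (count_leq_below m1 hba); case: leqP => //; lia.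
rewrite hab /=; apply/IH => j.
case: (ltnP j b) => hj; first by rewrite (count_leq_below m2 hj).
by have := H j; rewrite hj (leq_trans hab hj) /=; lia.
Qed.

Definition itv n lo hi : {set 'I_n} := [set i : 'I_n | lo <= i < hi].
Arguments itv : clear implicits.

Definition init_seg n j : {set 'I_n} := [set i : 'I_n | i < j].
Arguments init_seg : clear implicits.

Lemma count_enum_set (I : finType) (A : {set I}) (p : pred I) :
  count p (enum A) = #|[set i in A | p i]|.
Proof.
rewrite -size_filter.
have /card_uniqP <- : uniq (filter p (enum A)) by rewrite filter_uniq ?enum_uniq.
by apply: eq_card => i; rewrite mem_filter mem_enum !inE andbC.
Qed.

Lemma card_itv n lo hi : #|itv n lo hi| = minn hi n - lo.
Proof.
have -> : #|itv n lo hi| = count (fun i => lo <= i < hi) (iota 0 n).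
  have := count_enum_set [set: 'I_n] (fun i => lo <= i < hi).
  rewrite enum_setT -enumT -val_enum_ord count_map => ->.
  by apply: eq_card => i; rewrite !inE.
elim: n => [|n IH]; first by rewrite /= minn0.
rewrite -addn1 iotaD count_cat IH /= addn0 add0n.
by case: (leqP lo n); case: (ltnP n hi) => /= h1 h2; lia.
Qed.

Lemma size_sorted_elems n (T : {set 'I_n}) : size (sorted_elems T) = #|T|.
Proof. by rewrite /sorted_elems size_sort size_map cardE. Qed.

Lemma count_sorted_elems n (T : {set 'I_n}) j :
  count (fun v => v <= j) (sorted_elems T) = #|T :&: init_seg n j|.
Proof.
rewrite /sorted_elems count_sort count_map count_enum_set.
by apply: eq_card => i; rewrite !inE.
Qed.

Lemma gale_leP n (T S : {set 'I_n}) :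
  gale_le T S <-> #|T| = #|S| /\ forall j, #|S :&: init_seg n j| <= #|T :&: init_seg n j|.
Proof.
rewrite /gale_le; split.
  move=> /andP[/eqP hc ha]; split => // j; move: ha.
  rewrite all2_leq_count ?sort_sorted ?size_sorted_elems //.
  by move=> /(_ j); rewrite !count_sorted_elems.
move=> [hc hj]; rewrite hc eqxx /= all2_leq_count ?sort_sorted ?size_sorted_elems //.
by move=> j; rewrite !count_sorted_elems.
Qed.

Definition blocks2 n a m r : {set 'I_n} := [set i : 'I_n | (a - m <= i < a) || (n - (r - m) <= i)].
Arguments blocks2 : clear implicits.

Definition meet_bases (I : finType) (A : {set I}) r m : pred {set I} :=
  fun B => (#|B| == r) && (m <= #|B :&: A|).

Lemma card_blocks2 n a m r : m <= a -> m <= r -> a + (r - m) <= n -> #|blocks2 n a m r| = r.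
Proof.
move=> h1 h2 h3.
have -> : blocks2 n a m r = itv n (a - m) a :|: itv n (n - (r - m)) n.
  by apply/setP => i; rewrite !inE ltn_ord andbT.
rewrite cardsU (_ : _ :&: _ = set0) ?cards0 ?subn0 ?card_itv ?minnn; first lia.
by apply/setP => i; rewrite !inE; apply/negbTE; lia.
Qed.

Lemma card_init_seg_ge n (T : {set 'I_n}) j : #|T| - (n - j) <= #|T :&: init_seg n j|.
Proof.
have := cardsID (init_seg n j) T; have := subset_leq_card (subsetDr T (init_seg n j)).
have := cardsC (init_seg n j); rewrite card_ord.
have -> : init_seg n j = itv n 0 j by apply/setP => i; rewrite !inE.
by rewrite card_itv; lia.
Qed.

Lemma SM_blocks2 n a m r : m <= a -> m <= r -> a + (r - m) <= n ->
  SM (blocks2 n a m r) =1 meet_bases (init_seg n a) r m.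
Proof.
move=> h1 h2 h3 T; rewrite /SM /meet_bases; apply/idP/idP.
  move/gale_leP => [hc hj]; rewrite hc card_blocks2 // eqxx /=.
  apply: leq_trans (hj a); apply: leq_trans (subset_leq_card (_ : itv n (a - m) a \subset _)).
    by rewrite card_itv; lia.
  by apply/subsetP => i; rewrite !inE => /andP[-> ->].
move=> /andP[/eqP hc hm]; apply/gale_leP; rewrite card_blocks2 //; split => // j.
have hT := card_init_seg_ge T j.
case: (leqP j a) => hja.
  have hS : #|blocks2 n a m r :&: init_seg n j| <= j - (a - m).
    apply: leq_trans (subset_leq_card (_ : _ \subset itv n (a - m) j)) _.
      by apply/subsetP => i; rewrite !inE; lia.
    by rewrite card_itv; lia.
  have hTa : #|T :&: init_seg n a| <= #|T :&: init_seg n j| + (a - j).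
    apply: leq_trans (subset_leq_card (_ : _ \subset (T :&: init_seg n j) :|: itv n j a)) _.
      by apply/subsetP => i; rewrite !inE; lia.
    by apply: leq_trans (leq_card_setU _ _) _; rewrite card_itv; lia.
  lia.
have hS : #|blocks2 n a m r :&: init_seg n j| <= m + (minn j n - (n - (r - m))).
  apply: leq_trans (subset_leq_card (_ : _ \subset itv n (a - m) a :|: itv n (n - (r - m)) j)) _.
    by apply/subsetP => i; rewrite !inE; lia.
  by apply: leq_trans (leq_card_setU _ _) _; rewrite !card_itv; lia.
have hTa : #|T :&: init_seg n a| <= #|T :&: init_seg n j|.
  by apply: subset_leq_card; apply/subsetP => i; rewrite !inE; lia.
lia.
Qed.

Lemma exists_card_between (T : finType) (F P : {set T}) k :
  F \subset P -> #|F| <= k <= #|P| ->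
  exists B : {set T}, [/\ F \subset B, B \subset P & #|B| = k].
Proof.
move=> hFP /andP[hFk hkP]; have [e he] : exists e, e = k - #|F| by eexists.
elim: e F hFP hFk he => [|e IH] F hFP hFk he; first by exists F; split => //; lia.
have /properP[_ [x hxP hxF]] : F \proper P by rewrite properEcard hFP; lia.
have [|||B [hB1 hB2 hB3]] := IH (x |: F).
- by rewrite subUset sub1set hxP.
- by rewrite cardsU1 hxF; lia.
- by rewrite cardsU1 hxF; lia.
by exists B; split => //; apply: subset_trans hB1; apply: subsetUr.
Qed.

Lemma exists_round_set (I : finType) (D : {set I}) (x : I -> nat) T q :
  (forall i, x i <= T) -> q * T < \sum_(i in D) x i + T -> \sum_(i in D) x i < q.+1 * T ->
  exists B : {set I}, [/\ B \subset D, #|B| = q, forall i, i \in B -> 0 < x i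
                        & forall i, i \in D -> x i = T -> i \in B].
Proof.
move=> hx hlo hhi; set S := \sum_(i in D) x i in hlo hhi.
have hT : 0 < T.
  rewrite lt0n; apply/eqP => T0; move: hlo; rewrite T0 muln0 addn0 /S big1 // => i _.
  by apply/eqP; rewrite -leqn0 -T0.
set full := [set i in D | x i == T]; set supp := [set i in D | 0 < x i].
have full_S : #|full| * T <= S.
  rewrite -sum_nat_const /S [leqRHS](bigID (fun i => x i == T)) /=.
  apply: leq_trans (leq_addr _ _); rewrite (eq_bigl (fun i => (i \in D) && (x i == T))) => [|i].
    by apply: eq_leq; apply: eq_bigr => i /andP[_ /eqP].
  by rewrite inE.
have S_supp : S <= #|supp| * T.
  rewrite -sum_nat_const /S [leqLHS](bigID (fun i => 0 < x i)) /=.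
  rewrite [X in _ + X]big1 => [|i]; last first.
    by rewrite lt0n negbK => /andP[_ /eqP].
  rewrite addn0 [leqRHS](eq_bigl (fun i => (i \in D) && (0 < x i))) => [|i]; last by rewrite inE.
  exact: leq_sum.
have [||B [hB1 hB2 hB3]] := @exists_card_between _ full supp q.
- by apply/subsetP => i; rewrite !inE => /andP[-> /eqP ->].
- apply/andP; split; rewrite -ltnS -(ltn_pmul2r hT).
    exact: leq_ltn_trans full_S hhi.
  by rewrite mulSn; lia.
exists B; split => //.
- by apply: subset_trans hB2 _; apply/subsetP => i; rewrite inE => /andP[].
- by move=> i /(subsetP hB2); rewrite inE => /andP[].
by move=> i hiD hiT; apply: (subsetP hB1); rewrite inE hiD hiT eqxx.
Qed.

Lemma sum_set_indicator (I : finType) (A B : {set I}) :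
  \sum_(i in A) (i \in B : nat) = #|A :&: B|.
Proof.
rewrite -sum1_card [RHS](eq_bigl (fun i => (i \in A) && (i \in B))) => [|i]; last by rewrite inE.
by rewrite big_mkcondr; apply: eq_bigr => i _; case: (i \in B).
Qed.

Lemma sum_indicator (I : finType) (B : {set I}) : \sum_i (i \in B : nat) = #|B|.
Proof. by rewrite -sum1_card [RHS]big_mkcond; apply: eq_bigr => i _; case: (i \in B). Qed.

(* A lattice point of the [(t+1)]-st dilate is a base plus a lattice point of
   the [t]-th dilate: take [j = floor (sum_A x / (t+1))] elements in [A] and
   [r - j] outside, by rounding [x / (t+1)] on either side. *)
Lemma meet_bases_peel (I : finType) (A : {set I}) r m t (x : I -> nat) :
  (forall i, x i <= t.+1) -> \sum_i x i = r * t.+1 -> m * t.+1 <= \sum_(i in A) x i ->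
  exists B, [/\ meet_bases A r m B, forall i, i \in B -> 0 < x i,
                forall i, x i = t.+1 -> i \in B & m * t + #|B :&: A| <= \sum_(i in A) x i].
Proof.
move=> hx hs hA; set SA := \sum_(i in A) x i in hA *.
have hsplit : \sum_i x i = SA + \sum_(i in ~: A) x i.
  by rewrite (bigID (mem A)) /=; congr addn; apply: eq_bigl => i; rewrite inE.
set SC := \sum_(i in ~: A) x i in hsplit.
set j := SA %/ t.+1; have hSA := divn_eq SA t.+1; have hrho := ltn_pmod SA (ltn0Sn t).
rewrite -/j in hSA; set rho := SA %% t.+1 in hSA hrho.
have hjm : m <= j by rewrite leq_divRL.
have hjr : j <= r by rewrite -(leq_pmul2r (ltn0Sn t)) -hs hsplit hSA; lia.
have hSC : SC + rho = (r - j) * t.+1 by rewrite mulnBl -hs hsplit hSA; lia.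
have [||BA [hBA hcA hBA0 hBAt]] := @exists_round_set _ A x t.+1 j hx.
  1,2: by rewrite -/SA hSA ?mulSn; lia.
have [||BC [hBC hcC hBC0 hBCt]] := @exists_round_set _ (~: A) x t.+1 (r - j) hx.
  1,2: by rewrite -/SC ?mulSn; lia.
have hAB : (BA :|: BC) :&: A = BA.
  apply/setP => i; rewrite !inE andbC; apply/andP/idP => [[hiA /orP[//|hiC]] | hiBA].
    by move/(subsetP hBC): hiC; rewrite inE hiA.
  by rewrite (subsetP hBA _ hiBA) hiBA.
have hdisj : [disjoint BA & BC].
  apply/pred0P => i /=; apply/negP => /andP[/(subsetP hBA) hi /(subsetP hBC)].
  by rewrite inE hi.
exists (BA :|: BC); split.
- rewrite /meet_bases hAB hcA hjm andbT cardsU (disjoint_setI0 hdisj) cards0.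
  by rewrite hcA hcC subn0 subnKC.
- by move=> i; rewrite inE => /orP[/hBA0 | /hBC0].
- move=> i hi; rewrite inE; case: (boolP (i \in A)) => hiA; first by rewrite hBAt.
  by rewrite hBCt ?orbT // inE.
by rewrite hAB hcA hSA mulnS; have := leq_mul hjm (leqnn t); lia.
Qed.

Lemma meet_bases_decomposition (I : finType) (A : {set I}) r m t (x : I -> nat) :
  (forall i, x i <= t) -> \sum_i x i = r * t -> m * t <= \sum_(i in A) x i ->
  exists Bs : seq {set I}, [/\ size Bs = t, all (meet_bases A r m) Bs &
     forall i, x i = count (fun B : {set I} => i \in B) Bs].
Proof.
elim: t x => [|t IH] x hx hs hA.
  by exists [::]; split => // i; apply/eqP; rewrite -leqn0.
have [B [hB hB0 hBt hBA]] := meet_bases_peel hx hs hA.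
pose y i := x i - (i \in B).
have hxy i : x i = y i + (i \in B).
  by rewrite /y subnK //; case: (boolP (i \in B)) => // /hB0.
have [|||Bs [h1 h2 h3]] := IH y.
- move=> i; rewrite /y; case: (boolP (i \in B)) => hi; first by have := hx i; lia.
  by rewrite subn0 -ltnS ltn_neqAle hx andbT; apply: contraNneq hi => /hBt.
- have : \sum_i y i + #|B| = r * t.+1.
    by rewrite -hs -sum_indicator -big_split /=; apply: eq_bigr => i _; rewrite -hxy.
  by case/andP: hB => /eqP -> _; rewrite mulnS; lia.
- have : \sum_(i in A) y i + #|B :&: A| = \sum_(i in A) x i.
    by rewrite setIC -sum_set_indicator -big_split /=; apply: eq_bigr => i _; rewrite -hxy.
  lia.
exists (B :: Bs); split => /=; [by rewrite h1 | by rewrite hB h2 |].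
by move=> i; rewrite hxy h3 addnC.
Qed.

Import Order.TTheory GRing.Theory Num.Theory.
Local Open Scope ring_scope.

Definition eval2 (P : {poly {poly rat}}) (s t : nat) : rat := P.[(s%:R)%:P].[t%:R].

Definition polyfun2 (f : nat -> nat -> rat) := exists P, forall s t, f s t = eval2 P s t.

Lemma eval2E P s t : eval2 P s t = \sum_(i < size P) (P`_i).[t%:R] * s%:R ^+ i.
Proof.
rewrite /eval2 [P.[_]]horner_coef horner_sum; apply: eq_bigr => i _.
by rewrite hornerM -rmorphXn hornerC.
Qed.

Section Polyfun2.
Implicit Types f g : nat -> nat -> rat.

Lemma polyfun2_eval2 P : polyfun2 (eval2 P).
Proof. by exists P. Qed.

Lemma eq_polyfun2 f g : (forall s t, f s t = g s t) -> polyfun2 f -> polyfun2 g.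
Proof. by move=> e [P hP]; exists P => s t; rewrite -e. Qed.

Lemma polyfun2_poly_t (p : {poly rat}) : polyfun2 (fun _ t => p.[t%:R]).
Proof. by exists p%:P => s t; rewrite /eval2 !hornerC. Qed.

Lemma polyfun2_const c : polyfun2 (fun _ _ => c).
Proof. by apply: eq_polyfun2 (polyfun2_poly_t c%:P) => s t; rewrite hornerC. Qed.

Lemma polyfun2_s : polyfun2 (fun s _ => s%:R).
Proof. by exists 'X => s t; rewrite /eval2 hornerX hornerC. Qed.

Lemma polyfun2D f g : polyfun2 f -> polyfun2 g -> polyfun2 (fun s t => f s t + g s t).
Proof. by move=> [P hP] [Q hQ]; exists (P + Q) => s t; rewrite /eval2 !hornerD hP hQ. Qed.

Lemma polyfun2M f g : polyfun2 f -> polyfun2 g -> polyfun2 (fun s t => f s t * g s t).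
Proof. by move=> [P hP] [Q hQ]; exists (P * Q) => s t; rewrite /eval2 !hornerM hP hQ. Qed.

Lemma polyfun2N f : polyfun2 f -> polyfun2 (fun s t => - f s t).
Proof. by move=> [P hP]; exists (- P) => s t; rewrite /eval2 !hornerN hP. Qed.

Lemma polyfun2X f i : polyfun2 f -> polyfun2 (fun s t => f s t ^+ i).
Proof.
move=> hf; elim: i => [|i IH]; first exact: polyfun2_const.
by apply: eq_polyfun2 (polyfun2M hf IH) => s t; rewrite exprS.
Qed.

Lemma polyfun2_sum m (F : 'I_m -> nat -> nat -> rat) : (forall i, polyfun2 (F i)) ->
  polyfun2 (fun s t => \sum_(i < m) F i s t).
Proof.
elim: m F => [|m IH] F hF.
  by apply: eq_polyfun2 (polyfun2_const 0) => s t; rewrite big_ord0.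
apply: eq_polyfun2 (polyfun2D (IH (fun i => F (widen_ord (leqnSn m) i)) _) (hF ord_max)).
  by move=> s t; rewrite big_ord_recr.
by move=> i; apply: hF.
Qed.

Lemma polyfun2_comp_s f (g : nat -> nat -> nat) :
  polyfun2 f -> polyfun2 (fun s t => (g s t)%:R) -> polyfun2 (fun s t => f (g s t) t).
Proof.
move=> [P hP] hg.
apply: (@eq_polyfun2 (fun s t => \sum_(i < size P) (P`_i).[t%:R] * (g s t)%:R ^+ i)).
  by move=> s t; rewrite hP eval2E.
by apply: polyfun2_sum => i; apply: polyfun2M; [apply: polyfun2_poly_t | apply: polyfun2X].
Qed.

(* Telescoping [(u + 1)^(i+1) - u^(i+1)] expresses the power sum of exponent [i]
   through those of lower exponent. *)
Lemma polyfun2_power_sum i : polyfun2 (fun s _ => \sum_(u < s) (u%:R : rat) ^+ i).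
Proof.
elim/ltn_ind: i => i IH.
pose S j s := \sum_(u < s) (u%:R : rat) ^+ j.
have tel s : (s%:R : rat) ^+ i.+1 = \sum_(j < i.+1) 'C(i.+1, j)%:R * S j s.
  have := @telescope_sumr rat 0 s (fun u => (u%:R : rat) ^+ i.+1) (leq0n s).
  rewrite expr0n /= subr0 => <-.
  rewrite big_mkord.
  rewrite (eq_bigr (fun u : 'I_s => \sum_(j < i.+1) (u%:R : rat) ^+ j *+ 'C(i.+1, j))); last first.
    by move=> u _; rewrite -natr1 exprD1n big_ord_recr /= binn mulr1n addrK.
  rewrite exchange_big /=; apply: eq_bigr => j _; rewrite big_distrr /=.
  by apply: eq_bigr => u _; rewrite mulr_natl.
apply: (@eq_polyfun2 (fun s _ => (i.+1%:R)^-1 *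
    (s%:R ^+ i.+1 - \sum_(j < i) 'C(i.+1, j)%:R * S j s))).
  move=> s _; rewrite tel big_ord_recr /= addrAC subrr add0r binSn mulKf //.
  by rewrite pnatr_eq0.
apply: polyfun2M; first exact: polyfun2_const.
apply: polyfun2D; first exact: polyfun2X polyfun2_s.
apply: polyfun2N; apply: polyfun2_sum => j; apply: polyfun2M; first exact: polyfun2_const.
exact: IH.
Qed.

Lemma polyfun2_partial_sum f : polyfun2 f -> polyfun2 (fun s t => \sum_(u < s) f u t).
Proof.
move=> [P hP].
apply: (@eq_polyfun2 (fun s t => \sum_(i < size P) (P`_i).[t%:R] * \sum_(u < s) (u%:R : rat) ^+ i)).
  move=> s t; under [RHS]eq_bigr do rewrite hP eval2E.
  by rewrite exchange_big /=; apply: eq_bigr => i _; rewrite big_distrr.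
apply: polyfun2_sum => i; apply: polyfun2M; first exact: polyfun2_poly_t.
exact: polyfun2_power_sum.
Qed.

Lemma polyfun2_diag f : polyfun2 f -> exists p : {poly rat}, forall t, f t t = p.[t%:R].
Proof.
move=> [P hP]; exists (\sum_(i < size P) P`_i * 'X^i) => t.
rewrite hP eval2E horner_sum; apply: eq_bigr => i _.
by rewrite hornerM hornerXn.
Qed.

Lemma polyfun2_shift P : polyfun2 (fun s t => eval2 P s.+1 t).
Proof.
apply: polyfun2_comp_s (polyfun2_eval2 P) _.
by apply: eq_polyfun2 (polyfun2D polyfun2_s (polyfun2_const 1)) => s t; rewrite natr1.
Qed.

End Polyfun2.

Lemma nbox_polyfun2 d c : exists P, forall s t, (0 < s <= t)%N ->
  (nbox d t (c * t + s)%N)%:R = eval2 P s t.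
Proof.
have succ_t : polyfun2 (fun _ t => t.+1%:R).
  by apply: eq_polyfun2 (polyfun2_poly_t ('X + 1)) => s t; rewrite hornerD hornerX hornerC natr1.
elim: d c => [|d IH] c.
  by exists 0 => s t /andP[hs _]; rewrite nbox0 /eval2 !horner0; case: eqP => //; lia.
have [P hP] := IH c.
have hPS : polyfun2 (fun s t => \sum_(u < s) eval2 P u.+1 t).
  exact: polyfun2_partial_sum (polyfun2_shift P).
have Plow s t u : (0 < s <= t)%N -> (u < s)%N ->
    (nbox d t (c * t + u.+1)%N)%:R = eval2 P u.+1 t.
  by move=> hst hu; apply: hP; lia.
case: c hP Plow => [|c'] hP Plow.
  have [R hR] := polyfun2D hPS (polyfun2_const 1).
  exists R => s t hst; rewrite -hR nboxS_block // natrD natr_sum.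
  by congr (_ + _); apply: eq_bigr => u _; exact: Plow hst (ltn_ord u).
have [Q hQ] := IH c'.
have hQS : polyfun2 (fun s t => \sum_(u < t.+1) eval2 Q u t).
  exact: (polyfun2_comp_s (g := fun _ t => t.+1) (polyfun2_partial_sum (polyfun2_eval2 Q)) succ_t).
have [R hR] := polyfun2D hPS (polyfun2D hQS (polyfun2N (polyfun2_partial_sum (polyfun2_eval2 Q)))).
exists R => s t hst; rewrite -hR nboxS_block // natrD.
congr (_ + _); first by rewrite natr_sum; apply: eq_bigr => u _; exact: Plow hst (ltn_ord u).
rewrite -!(big_mkord xpredT (fun u => eval2 Q u t)).
rewrite (@big_cat_nat _ _ _ s 0 t.+1) //=; last by lia.
rewrite addrAC subrr add0r natr_sum; apply: eq_big_nat => u hu.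
by rewrite hQ //; lia.
Qed.

Lemma nbox_mul_poly d k : (0 < k)%N ->
  exists p : {poly rat}, forall t, (0 < t)%N -> (nbox d t (k * t)%N)%:R = p.[t%:R].
Proof.
move=> hk; have [P hP] := nbox_polyfun2 d (k - 1)%N.
have [p hp] := polyfun2_diag (polyfun2_eval2 P).
exists p => t ht; rewrite -hp -hP ?ht ?leqnn //.
by rewrite mulnBl mul1n subnK // leq_pmull.
Qed.

Lemma nbox_dot_poly a b : exists p : {poly rat}, forall t, (nbox_dot a b t)%:R = p.[t%:R].
Proof.
have [Pa hPa] := nbox_polyfun2 a 0; have [Pb hPb] := nbox_polyfun2 b 0.
have [p hp] := polyfun2_diag (polyfun2D (polyfun2_const 1)
  (polyfun2_partial_sum (polyfun2M (polyfun2_shift Pa) (polyfun2_shift Pb)))).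
exists p => t; rewrite -hp /nbox_dot big_ord_recl /= !nbox_sum0 natrD natr_sum.
congr (_ + _); apply: eq_bigr => u _.
have hu : (0 < u.+1 <= t)%N by rewrite ltn0Sn /=; exact: ltn_ord.
by rewrite natrM -(hPa _ _ hu) -(hPb _ _ hu).
Qed.

Definition meet_point n (A : {set 'I_n}) r m t (x : {ffun 'I_n -> int}) : Prop :=
  [/\ forall i, 0 <= x i <= t%:Z, \sum_i x i = (r * t)%N%:Z &
      (m * t)%N%:Z <= \sum_(i in A) x i].

Lemma sum_count_mem (I : finType) (s : seq {set I}) (P : pred {set I}) (w : {set I} -> nat) :
  all P s -> (\sum_(B | P B) count_mem B s * w B = \sum_(B <- s) w B)%N.
Proof.
elim: s => [|x s IH] /=; first by rewrite big_nil big1 // => B _; rewrite mul0n.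
move=> /andP[hx hs]; rewrite big_cons -IH //.
under eq_bigr do rewrite mulnDl.
rewrite big_split /= (bigD1 x) //= eqxx mul1n big1 ?addn0 // => B /andP[_ hB].
by rewrite eq_sym (negbTE hB) mul0n.
Qed.

Lemma in_dilate_meet_point n (A : {set 'I_n}) r m t x :
  in_dilate (meet_bases A r m) t x -> meet_point A r m t x.
Proof.
case=> lam [hl0 [hsum hx]].
have sum_x (D : {set 'I_n}) : ((\sum_(i in D) x i)%:~R : rat) =
    \sum_(B | meet_bases A r m B) lam B * #|B :&: D|%:R.
  rewrite rmorph_sum /=; under eq_bigr do rewrite hx.
  rewrite exchange_big /=; apply: eq_bigr => B _.
  by rewrite -mulr_sumr -natr_sum setIC -sum_set_indicator.
split.
- move=> i; apply/andP; split.
    by rewrite -(ler0z rat) hx; apply: sumr_ge0 => B _; exact: mulr_ge0.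
  rewrite -(ler_int rat) hx -[(t%:Z)%:~R]/(t%:R : rat) -hsum; apply: ler_sum => B _.
  by case: (i \in B); rewrite ?mulr1 ?mulr0.
- apply: (@intr_inj rat); rewrite -(eq_bigl _ _ (@in_setT _)) sum_x.
  rewrite (eq_bigr (fun B => lam B * r%:R)) => [|B /andP[/eqP <- _]]; last by rewrite setIT.
  by rewrite -mulr_suml hsum -natrM mulnC.
rewrite -(ler_int rat) sum_x; apply: le_trans (_ : \sum_(B | meet_bases A r m B) lam B * m%:R <= _).
  by rewrite -mulr_suml hsum -natrM mulnC.
by apply: ler_sum => B /andP[_ hB]; apply: ler_wpM2l => //; rewrite ler_nat.
Qed.

Lemma meet_point_in_dilate n (A : {set 'I_n}) r m t x :
  meet_point A r m t x -> in_dilate (meet_bases A r m) t x.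
Proof.
case=> hb hs hA; pose y i := `|x i|%N.
have hxy i : x i = (y i)%:Z by rewrite /y gez0_abs //; case/andP: (hb i).
have sum_y (P : pred 'I_n) : (\sum_(i | P i) y i)%N%:Z = \sum_(i | P i) x i.
  by rewrite -natz natr_sum; apply: eq_bigr => i _; rewrite natz hxy.
have [|||Bs [hsz hall hcnt]] := @meet_bases_decomposition _ A r m t y.
- by move=> i; rewrite -lez_nat -hxy; case/andP: (hb i).
- by apply/eqP; rewrite -eqz_nat -hs (sum_y xpredT).
- by rewrite -lez_nat (sum_y (mem A)).
exists (fun B => (count_mem B Bs)%:R); split; [|split].
- by move=> B; rewrite ler0n.
- rewrite -natr_sum; congr (_%:R); under eq_bigr do rewrite -[count_mem _ _]muln1.
  by rewrite (@sum_count_mem _ Bs _ (fun _ => 1%N) hall) sum1_size.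
move=> i; rewrite hxy; under eq_bigr do rewrite -natrM.
rewrite -natr_sum (@sum_count_mem _ Bs _ (fun B => (i \in B : nat)) hall) hcnt.
by congr (_%:R); elim: Bs {hsz hall hcnt} => [|B Bs IH]; rewrite ?big_nil ?big_cons //= IH.
Qed.

Lemma in_dilate_meet_bases n (A : {set 'I_n}) r m t x :
  in_dilate (meet_bases A r m) t x <-> meet_point A r m t x.
Proof. by split; [apply: in_dilate_meet_point | apply: meet_point_in_dilate]. Qed.

Lemma sum_nth_ord (y : seq nat) n : (size y <= n)%N -> (\sum_(i < n) nth 0 y i)%N = sumn y.
Proof.
elim: y n => [|v y IH] n hs; first by rewrite big1 // => i _; rewrite nth_nil.
by case: n hs => [|n] // hs; rewrite big_ord_recl /= IH.
Qed.

Lemma sum_nth_init_seg (y : seq nat) n a : size y = n ->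
  (\sum_(i in init_seg n a) nth 0 y i)%N = sumn (take a y).
Proof.
move=> hs; rewrite -(@sum_nth_ord (take a y) n); last by rewrite size_take -hs geq_minr.
rewrite big_mkcond /=; apply: eq_bigr => i _; rewrite inE.
by case: ltnP => h; [rewrite nth_take | rewrite nth_default // size_take; case: ltnP; lia].
Qed.

Definition ffun_of_seq n (y : seq nat) : {ffun 'I_n -> int} := [ffun i : 'I_n => (nth 0 y i)%:Z].

Lemma meet_point_ffun_of_seq n a r m t y : y \in box n t ->
  sumn y = (r * t)%N -> (m * t <= sumn (take a y))%N ->
  meet_point (init_seg n a) r m t (ffun_of_seq n y).
Proof.
move=> hy hs hA; have hsz := size_box hy; move: hy; rewrite mem_box => /andP[_ /allP hall].
have sum_y (P : pred 'I_n) : \sum_(i | P i) ffun_of_seq n y i = (\sum_(i | P i) nth 0 y i)%N%:Z.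
  by rewrite -natz natr_sum; apply: eq_bigr => i _; rewrite ffunE natz.
split.
- move=> i; rewrite ffunE lez_nat /=.
  by case: (ltnP i (size y)) => hi; [apply/hall/mem_nth | rewrite nth_default].
- by rewrite sum_y sum_nth_ord ?hsz // hs.
by rewrite sum_y lez_nat sum_nth_init_seg.
Qed.

Lemma meet_point_seq n a r m t x : meet_point (init_seg n a) r m t x ->
  exists2 y, [&& sumn y == r * t, m * t <= sumn (take a y) & y \in box n t]%N
           & x = ffun_of_seq n y.
Proof.
case=> hb hs hA; pose y := [seq `|x i|%N | i <- enum 'I_n].
have hsz : size y = n by rewrite size_map size_enum_ord.
have hxy i : x i = (nth 0 y i)%:Z.
  by rewrite (nth_map i) ?size_enum_ord // nth_ord_enum gez0_abs //; case/andP: (hb i).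
have sum_y (P : pred 'I_n) : (\sum_(i | P i) nth 0 y i)%N%:Z = \sum_(i | P i) x i.
  by rewrite -natz natr_sum; apply: eq_bigr => i _; rewrite natz hxy.
exists y; last by apply/ffunP => i; rewrite ffunE hxy.
apply/and3P; split.
- by rewrite -(sum_nth_ord (eq_leq hsz)) -eqz_nat sum_y hs.
- by rewrite -(sum_nth_init_seg _ hsz) -lez_nat (sum_y (fun i => i \in init_seg n a)).
rewrite mem_box hsz eqxx /=.
by apply/allP => v /mapP [i _ ->]; rewrite -lez_nat gez0_abs; case/andP: (hb i).
Qed.

Lemma lattice_count_meet_bases n r a m t : (a <= n)%N ->
  lattice_count (meet_bases (init_seg n a) r m) t (nbox_split a (n - a) t (r * t) (m * t)).
Proof.
move=> han.
pose good (y : seq nat) := (sumn y == r * t)%N && (m * t <= sumn (take a y))%N.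
exists [seq ffun_of_seq n y | y <- box n t & good y]; split; [|split].
- rewrite map_inj_in_uniq ?filter_uniq ?box_uniq // => y1 y2.
  rewrite !mem_filter => /andP[_ h1] /andP[_ h2] e.
  apply: (@eq_from_nth _ 0%N); first by rewrite (size_box h1) (size_box h2).
  move=> i; rewrite (size_box h1) => hi.
  by have := congr1 (fun f : {ffun 'I_n -> int} => f (Ordinal hi)) e; rewrite !ffunE => -[].
- move=> x; rewrite in_dilate_meet_bases; split.
    case/mapP => y; rewrite mem_filter => /andP[/andP[/eqP hs hA] hy] ->.
    exact: meet_point_ffun_of_seq.
  by case/meet_point_seq => y hy ->; apply/map_f; rewrite mem_filter /good -andbA.
by rewrite size_map size_filter -sum1_count big_mkcond -nbox_splitE subnKC.
Qed.

Lemma eq_lattice_count n (b1 b2 : pred {set 'I_n}) t c : b1 =1 b2 ->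
  lattice_count b2 t c -> lattice_count b1 t c.
Proof.
move=> e [s [hu [hm hs]]]; exists s; split => //; split => // x; rewrite hm.
have E (F : {set 'I_n} -> rat) : \sum_(B | b1 B) F B = \sum_(B | b2 B) F B by apply: eq_bigl.
split; case=> lam [h0 [h1 h2]]; exists lam; split => //; split => [|i].
- by rewrite E.
- by rewrite E h2.
- by rewrite -E.
- by rewrite -E h2.
Qed.

Lemma lattice_count_blocks2 n a m r t : (m <= a)%N -> (m <= r)%N -> (a + (r - m) <= n)%N ->
  lattice_count (SM (blocks2 n a m r)) t (nbox_split a (n - a) t (r * t) (m * t)).
Proof.
move=> h1 h2 h3; apply: eq_lattice_count (SM_blocks2 h1 h2 h3) _.
by apply: lattice_count_meet_bases; lia.
Qed.

Lemma lattice_count_Spkn k n t : (0 < k < n)%N ->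
  lattice_count (Spkn k n) t (nbox_split k (n - k) t ((n - k) * t) t).
Proof.
move=> hk; rewrite -[X in nbox_split _ _ _ _ X]mul1n /Spkn.
have -> : [set i : 'I_n | (i.+1 == k) || (k + 2 <= i.+1)%N] = blocks2 n k 1 (n - k).
  by apply/setP => i; rewrite !inE; case: i => i hi /=; lia.
by apply: lattice_count_blocks2; lia.
Qed.

Lemma lattice_count_Ukn k n t : (k <= n)%N -> lattice_count (Ukn k n) t (nbox n t (k * t)).
Proof.
move=> hk; rewrite -[n in nbox n]add0n nbox_add -[X in nbox_split _ _ _ _ X](mul0n t) /Ukn.
have -> : [set i : 'I_n | (n - k + 1 <= i.+1)%N] = blocks2 n 0 0 k.
  by apply/setP => i; rewrite !inE; case: i => i hi /=; lia.
by rewrite -[X in nbox_split _ X](subn0 n); apply: lattice_count_blocks2; lia.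
Qed.

Lemma lattice_count_Tkn k n t : (0 < k < n)%N -> lattice_count (Tkn k n) t (nbox_dot k (n - k) t).
Proof.
move=> hk; rewrite -nbox_split_top; last by lia.
have -> : Tkn k n = SM (blocks2 n k (k - 1) k).
  rewrite /Tkn; congr SM; apply/setP => i; rewrite !inE; case: i => i hi /=; lia.
by apply: lattice_count_blocks2; lia.
Qed.

Unset Implicit Arguments.

Theorem lemma6p2 (k n : nat) (hk : (2 <= k)%N) (hkn : (k + 2 <= n)%N) :
  exists p1 p2 p3 p4 : {poly rat},
    [/\ ehrhart_poly (Spkn k n) p1, ehrhart_poly (Spkn (n - k) n) p2,
        ehrhart_poly (Ukn k n) p3, ehrhart_poly (Tkn k n) p4 &
        p1 = p2 /\ p1 = p3 - (p4 \Po ('X - 1))].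
Proof.
have k_le_n : (k <= n)%N by lia.
have [p3 hp3] := nbox_mul_poly n (ltnW hk).
have [p4 hp4] := nbox_dot_poly k (n - k).
pose p1 := p3 - (p4 \Po ('X - 1)).
have hp1 t : (0 < t)%N -> p1.[t%:R] = (nbox_split (n - k) k t (k * t) t)%:R.
  case: t => // t _; rewrite /p1 hornerD hornerN horner_comp !hornerE -natr1 addrK natr1.
  by rewrite -hp3 // -hp4 -[in nbox n](subnK k_le_n) nbox_add_split ?natrD ?addrK //; lia.
exists p1, p1, p3, p4; split => //.
- move=> t ht; eexists; split; first by apply: lattice_count_Spkn; lia.
  by rewrite nbox_split_swap hp1.
- move=> t ht; eexists; split; first by apply: lattice_count_Spkn; lia.
  by rewrite subKn ?hp1 //; lia.
- by move=> t ht; eexists; split; [apply: lattice_count_Ukn; lia | rewrite hp3].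
- by move=> t ht; eexists; split; [apply: lattice_count_Tkn; lia | rewrite hp4].
Qed.
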